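(* Let $\mathcal{S}$ be a state space, let the action space be $\mathbb{R}^D$, and let $\alpha>0$. Let $p_{\mathbf{z}}$ be a probability density on $\mathbb{R}^D$. For each state $\mathbf{s}_t\in\mathcal{S}$ let $g_\theta(\cdot\,|\,\mathbf{s}_t)=g^L_\theta\circ\cdots\circ g^1_\theta:\mathbb{R}^D\to\mathbb{R}^D$ be an invertible differentiable map with differentiable layers $g^i_\theta(\cdot\,|\,\mathbf{s}_t)$, let $\mathcal{S}_n$ be the set of indices $i$ for which $g^i_\theta$ is non-linear, write $\mathbf{a}^0=\mathbf{a}$, $\mathbf{a}^i=g^i_\theta\circ\cdots\circ g^1_\theta(\mathbf{a}|\mathbf{s}_t)$, and define $$Q_\theta(\mathbf{s}_t,\mathbf{a})=\alpha\log\Big(p_{\mathbf{z}}\big(g_\theta(\mathbf{a}|\mathbf{s}_t)\big)\prod_{i\in\mathcal{S}_n}\big|\det\mathbf{J}_{g^i_\theta}(\mathbf{a}^{i-1}|\mathbf{s}_t)\big|\Big).$$ Suppose that for each $i$, $|\det\mathbf{J}_{g^i_\theta}(\mathbf{a}^{i-1}|\mathbf{s}_t)|$ is a constant with respect to $\mathbf{a}^{i-1}$. Then $g^{-1}_\theta\big(\mathrm{argmax}_{\mathbf{z}}\,p_{\mathbf{z}}(\mathbf{z})\,\big|\,\mathbf{s}_t\big)=\mathrm{argmax}_{\mathbf{a}}\,Q_\theta(\mathbf{s}_t,\mathbf{a})$.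
   Context: $\mathbf{J}_{g^i_\theta}(\mathbf{a}^{i-1}|\mathbf{s}_t)$ denotes the Jacobian of the $i$-th layer $g^i_\theta(\cdot|\mathbf{s}_t)$ evaluated at $\mathbf{a}^{i-1}$. $g^{-1}_\theta(\cdot|\mathbf{s}_t)$ is the inverse of $g_\theta(\cdot|\mathbf{s}_t)$. Here $\mathrm{argmax}$ denotes the maximizer(s) of the given function, and $g_\theta^{-1}(\cdot|\mathbf{s}_t)$ is applied to the maximizer(s) of $p_{\mathbf{z}}$. *)

From HB Require Import structures.
From mathcomp Require Import all_boot all_order all_algebra.
From mathcomp Require Import all_classical all_reals all_analysis.
Set Implicit Arguments. Unset Strict Implicit. Unset Printing Implicit Defensive.
Import Order.TTheory GRing.Theory Num.Theory.
Import numFieldNormedType.Exports.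
Local Open Scope classical_set_scope.
Local Open Scope ring_scope.

Definition elog (R : realType) (x : R) : \bar R :=
  if (0 < x)%R then (ln x)%:E else -oo%E.

Definition argmax (T : Type) (d : Order.disp_t) (X : porderType d) (f : T -> X)
  : set T := [set x | forall y, (f y <= f x)%O].

(* Intermediate activations: acts layer s a k = a^k = g^k o ... o g^1 (a | s),
   where layer i (0-indexed) is the paper's g^{i+1}. *)
Fixpoint acts (R : realType) (D : nat) (S : Type)
  (layer : nat -> S -> 'rV[R]_D -> 'rV[R]_D) (s : S) (a : 'rV[R]_D) (k : nat)
  : 'rV[R]_D :=
  match k with
  | 0 => a
  | k'.+1 => layer k' s (acts layer s a k')
  end.

Definition flow (R : realType) (D L : nat) (S : Type)
  (layer : nat -> S -> 'rV[R]_D -> 'rV[R]_D) (s : S) (a : 'rV[R]_D) : 'rV[R]_D :=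
  acts layer s a L.

Definition is_linear_layer (R : realType) (D : nat) (f : 'rV[R]_D -> 'rV[R]_D) : Prop :=
  exists (M : 'M[R]_D) (b : 'rV[R]_D), forall x, f x = x *m M + b.

Definition Qfun (R : realType) (D L : nat) (S : Type) (alpha : R)
  (pz : 'rV[R]_D -> R) (layer : nat -> S -> 'rV[R]_D -> 'rV[R]_D)
  (s : S) (a : 'rV[R]_D) : \bar R :=
  (alpha%:E * elog (pz (flow L layer s a) *
      \prod_(i < L | `[< ~ is_linear_layer (layer i s) >])
          `|\det ('J (layer i s) (acts layer s a i))|))%E.

(* Every layer has a Jacobian determinant of constant modulus, and this modulus is
   non-zero: by the chain rule the Jacobian determinant of g is the product of those
   of the layers, and it cannot vanish because g has a differentiable inverse.  Hence
   Q(s, a) = alpha log (C p_z(g a)) with a constant C > 0, which is a strictly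
   increasing function of p_z(g a); the bijection g^-1 therefore maps the maximizers
   of p_z onto those of Q. *)
From HB Require Import structures.
From mathcomp Require Import all_boot all_order all_algebra.
From mathcomp Require Import all_classical all_reals all_analysis.
Set Implicit Arguments. Unset Strict Implicit. Unset Printing Implicit Defensive.
Import Order.TTheory GRing.Theory Num.Theory.
Import numFieldNormedType.Exports.
Local Open Scope classical_set_scope.
Local Open Scope ring_scope.

Lemma image_argmax_can (T U : Type) (d d' : Order.disp_t)
    (X : porderType d) (Y : porderType d') (p : U -> X) (Q : T -> Y)
    (h : T -> U) (g : U -> T) :
  cancel h g -> cancel g h ->
  (forall a b, (Q a <= Q b)%O = (p (h a) <= p (h b))%O) ->
  g @` argmax p = argmax Q.
Proof.
move=> hK gK leQ; apply/seteqP; split.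
- by move=> _ [z zmax <-] b; rewrite leQ gK.
- move=> a amax; exists (h a); last by rewrite hK.
  by move=> y; have := amax (g y); rewrite leQ gK.
Qed.

Section ElogMonotone.
Context {R : realType}.

Lemma lee_elog (x y : R) : 0 <= x -> 0 <= y -> (elog x <= elog y)%E = (x <= y).
Proof.
rewrite /elog => x0 y0; case: ltP => xp; case: ltP => yp.
- by rewrite lee_fin ler_ln.
- by rewrite leeNy_eq lt_geF // (le_lt_trans yp xp).
- by rewrite leNye (le_trans xp (ltW yp)).
- by rewrite lexx (@le_anti _ _ x 0) ?xp ?x0 // (@le_anti _ _ y 0) ?yp ?y0.
Qed.

Lemma lee_pM_elog (alpha c x y : R) : 0 < alpha -> 0 < c -> 0 <= x -> 0 <= y ->
  (alpha%:E * elog (x * c) <= alpha%:E * elog (y * c))%E = (x <= y).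
Proof.
move=> alpha0 c0 x0 y0.
have c_ge0 := ltW c0.
by rewrite lee_pmul2l ?lte_fin // lee_elog ?mulr_ge0 // ler_pM2r.
Qed.

End ElogMonotone.

Section Jacobian.
Context {R : realType}.

Lemma jacobian_comp n m p (f : 'rV[R]_n -> 'rV[R]_m) (g : 'rV[R]_m -> 'rV[R]_p) x :
  differentiable f x -> differentiable g (f x) ->
  'J (g \o f) x = 'J f x *m 'J g (f x).
Proof.
move=> df dg; apply/row_matrixP => i.
by rewrite !rowE mulmxA /jacobian !mul_rV_lin1 diff_comp.
Qed.

Lemma jacobian_id n (x : 'rV[R]_n) : 'J id x = 1%:M.
Proof.
apply/row_matrixP => i.
by rewrite !rowE /jacobian mul_rV_lin1 mulmx1 (@diff_val _ _ _ _ _ _ _ (is_diff_id x)).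
Qed.

Lemma det_jacobian_neq0_can n (f g : 'rV[R]_n -> 'rV[R]_n) y :
  cancel g f -> differentiable g y -> differentiable f (g y) ->
  \det ('J f (g y)) != 0.
Proof.
move=> gK dg df.
have fgE : f \o g = id by apply/funext => z /=; rewrite gK.
have := congr1 determinant (jacobian_comp dg df).
rewrite fgE jacobian_id det1 det_mulmx => detE.
have : \det ('J g y) * \det ('J f (g y)) != 0 by rewrite -detE oner_neq0.
by rewrite mulf_eq0 negb_or => /andP[].
Qed.

End Jacobian.

Section Flow.
Context {R : realType} {D : nat} {S : Type}.
Variables (layer : nat -> S -> 'rV[R]_D -> 'rV[R]_D) (L : nat) (s : S).
Hypothesis layer_diff : forall i x, (i < L)%N -> differentiable (layer i s) x.

Lemma differentiable_acts k a : (k <= L)%N ->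
  differentiable (fun b => acts layer s b k) a.
Proof.
elim: k => [|k IHk] kL; first exact: ex_diff.
apply: (@differentiable_comp _ _ _ _ (fun b => acts layer s b k) (layer k s)).
  exact: IHk (ltnW kL).
exact: layer_diff.
Qed.

Lemma det_jacobian_acts k a : (k <= L)%N ->
  \det ('J (fun b => acts layer s b k) a) =
    \prod_(i < k) \det ('J (layer i s) (acts layer s a i)).
Proof.
elim: k => [|k IHk] kL; first by rewrite big_ord0 jacobian_id det1.
rewrite big_ord_recr /= -IHk ?(ltnW kL) //.
rewrite -[X in 'J X a]/(layer k s \o (fun b => acts layer s b k)).
rewrite jacobian_comp ?det_mulmx //; last exact: layer_diff.
exact: differentiable_acts (ltnW kL).
Qed.

Variable ginv : 'rV[R]_D -> 'rV[R]_D.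
Hypotheses (flowK : cancel (flow L layer s) ginv)
  (ginvK : cancel ginv (flow L layer s))
  (ginv_diff : forall y, differentiable ginv y).

Lemma det_jacobian_layer_neq0 a (i : 'I_L) :
  \det ('J (layer i s) (acts layer s a i)) != 0.
Proof.
have flow_det : \det ('J (flow L layer s) a) != 0.
  have := det_jacobian_neq0_can ginvK (ginv_diff (flow L layer s a)).
  by rewrite flowK; apply; apply: differentiable_acts.
have detE : \det ('J (flow L layer s) a) =
    \prod_(i < L) \det ('J (layer i s) (acts layer s a i)).
  exact: det_jacobian_acts.
rewrite {}detE in flow_det.
by move/prodf_neq0: flow_det; apply.
Qed.

Hypothesis layer_det_const : forall i, (i < L)%N ->
  exists c : R, forall x, `|\det ('J (layer i s) x)| = c.

Lemma lee_Qfun (alpha : R) (pz : 'rV[R]_D -> R) a b :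
  0 < alpha -> (forall z, 0 <= pz z) ->
  (Qfun L alpha pz layer s a <= Qfun L alpha pz layer s b)%E =
    (pz (flow L layer s a) <= pz (flow L layer s b)).
Proof.
move=> alpha0 pz0.
pose P a := \prod_(i < L | `[< ~ is_linear_layer (layer i s) >])
  `|\det ('J (layer i s) (acts layer s a i))|.
have P_gt0 : 0 < P a.
  by apply: prodr_gt0 => i _; rewrite normr_gt0 det_jacobian_layer_neq0.
have P_const : P b = P a.
  apply: eq_bigr => i _; have [c detE] := layer_det_const (ltn_ord i).
  by rewrite [LHS]detE [RHS]detE.
have QE c : Qfun L alpha pz layer s c =
    (alpha%:E * elog (pz (flow L layer s c) * P c))%E by [].
rewrite !QE P_const.
exact: lee_pM_elog.
Qed.

End Flow.

Theorem proposition3p2 (R : realType) (D L : nat) (S : Type) (alpha : R)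
  (pz : 'rV[R]_D -> R) (layer : nat -> S -> 'rV[R]_D -> 'rV[R]_D)
  (ginv : S -> 'rV[R]_D -> 'rV[R]_D) :
  0 < alpha ->
  (forall z, 0 <= pz z) ->
  (forall i s x, (i < L)%N -> differentiable (layer i s) x) ->
  (forall s, cancel (flow L layer s) (ginv s)) ->
  (forall s, cancel (ginv s) (flow L layer s)) ->
  (forall s y, differentiable (ginv s) y) ->
  (forall i s, (i < L)%N -> exists c : R,
      forall x, `|\det ('J (layer i s) x)| = c) ->
  forall s : S,
    ginv s @` argmax pz = argmax (Qfun L alpha pz layer s).
Proof.
move=> alpha0 pz0 layer_diff flowK ginvK ginv_diff layer_det_const s.
apply: image_argmax_can (flowK s) (ginvK s) _ => a b.
rewrite (lee_Qfun _ (flowK s) (ginvK s) (ginv_diff s) _ a b alpha0 pz0) //.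
- by move=> i x; apply: layer_diff.
- by move=> i; apply: layer_det_const.
Qed.
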